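(* Let $k\ge5$ be an integer and let $F:(\mathbb R^3\times\mathbb R,0)\to(\mathbb R^2,0)$, $F(x,y,z,t)=\bigl(x,\ (y(x^2+y^2+z^2))^3+x^2y(x^2+y^2+z^2)+tx^k\bigr)$, viewed as a deformation of $F_0=F(\cdot,\cdot,\cdot,0)$. Then $\operatorname{Sing}F=V(F)=\{x=y=0\}$; $F$ does not satisfy condition (L): there is no $0<\theta<1$ such that for every $x_0\in F_0^{-1}(0)\cap\operatorname{Sing}F_0\setminus\{0\}$ some $c(x_0)>0$ gives $\|F(x,t)\|^\theta\le c(x_0)\nu_{F_t}(x)$ for $(x,t)\notin\operatorname{Sing}\widetilde F$ near $(x_0,0)$; whereas $F$ does satisfy condition (P): for every $p\in F_0^{-1}(0)\cap\operatorname{Sing}F_0\setminus\{0\}$ there is $c(p)>0$ with $\|\partial F/\partial t(x,y,z,t)\|\le c(p)\nu_{F_t}(x,y,z)$ for all points $\notin\operatorname{Sing}\widetilde F$ near $(p,0)$.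
   Context: For $F=(f_1,\dots,f_m)$ depending on $(u,t)\in\mathbb R^n\times\mathbb R$, $\nu_{F_t}(u):=\min_{a\in\mathbb R^m,\|a\|=1}\bigl\|\sum_i a_i\operatorname{grad}_u f_i(u,t)\bigr\|$, where $\operatorname{grad}_u$ contains only the derivatives in the variables $u$ (here $u=(x,y,z)$). $\widetilde F(u,t)=(F(u,t),t)$; $V(F)=F^{-1}(0)$; $\operatorname{Sing}$ of a map is the set where its Jacobian has rank less than the target dimension. *)

From Stdlib Require Import Reals.
From Coquelicot Require Import Coquelicot.
Open Scope R_scope.

Definition fun4 := R -> R -> R -> R -> R.

Definition dX (g : fun4) x y z t := Derive (fun s => g s y z t) x.
Definition dY (g : fun4) x y z t := Derive (fun s => g x s z t) y.
Definition dZ (g : fun4) x y z t := Derive (fun s => g x y s t) z.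
Definition dT (g : fun4) x y z t := Derive (fun s => g x y z s) t.

Definition f1 : fun4 := fun x y z t => x.
Definition f2 (k : nat) : fun4 := fun x y z t =>
  (y * (x^2 + y^2 + z^2))^3 + x^2 * y * (x^2 + y^2 + z^2) + t * x^k.
(* third component of  F~(u,t) = (F(u,t), t) *)
Definition ft : fun4 := fun x y z t => t.

(* Sing F: the 2x4 Jacobian of F w.r.t. (x,y,z,t) has rank < 2,
   i.e. its rows are linearly dependent. *)
Definition SingF (k : nat) x y z t : Prop :=
  exists a1 a2 : R, (a1 <> 0 \/ a2 <> 0) /\
    a1 * dX f1 x y z t + a2 * dX (f2 k) x y z t = 0 /\
    a1 * dY f1 x y z t + a2 * dY (f2 k) x y z t = 0 /\
    a1 * dZ f1 x y z t + a2 * dZ (f2 k) x y z t = 0 /\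
    a1 * dT f1 x y z t + a2 * dT (f2 k) x y z t = 0.

(* Sing F~: the 3x4 Jacobian of F~ = (f1, f2, t) has rank < 3. *)
Definition SingFtilde (k : nat) x y z t : Prop :=
  exists a1 a2 a3 : R, (a1 <> 0 \/ a2 <> 0 \/ a3 <> 0) /\
    a1 * dX f1 x y z t + a2 * dX (f2 k) x y z t + a3 * dX ft x y z t = 0 /\
    a1 * dY f1 x y z t + a2 * dY (f2 k) x y z t + a3 * dY ft x y z t = 0 /\
    a1 * dZ f1 x y z t + a2 * dZ (f2 k) x y z t + a3 * dZ ft x y z t = 0 /\
    a1 * dT f1 x y z t + a2 * dT (f2 k) x y z t + a3 * dT ft x y z t = 0.

(* Sing F_0 for F_0 = F(.,.,.,0) : R^3 -> R^2: the 2x3 Jacobian has rank < 2. *)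
Definition SingF0 (k : nat) x y z : Prop :=
  exists a1 a2 : R, (a1 <> 0 \/ a2 <> 0) /\
    a1 * dX f1 x y z 0 + a2 * dX (f2 k) x y z 0 = 0 /\
    a1 * dY f1 x y z 0 + a2 * dY (f2 k) x y z 0 = 0 /\
    a1 * dZ f1 x y z 0 + a2 * dZ (f2 k) x y z 0 = 0.

Definition norm2 (a b : R) := sqrt (a^2 + b^2).
Definition norm3 (a b c : R) := sqrt (a^2 + b^2 + c^2).

(* nu_{F_t}(u) = min_{|a|=1} || a1 grad_u f1 (u,t) + a2 grad_u f2 (u,t) ||
   (the minimum exists; we take the greatest lower bound of the values). *)
Definition nu (k : nat) x y z t : R :=
  real (Glb_Rbar (fun r => exists a1 a2 : R, a1^2 + a2^2 = 1 /\
    r = norm3 (a1 * dX f1 x y z t + a2 * dX (f2 k) x y z t)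
              (a1 * dY f1 x y z t + a2 * dY (f2 k) x y z t)
              (a1 * dZ f1 x y z t + a2 * dZ (f2 k) x y z t))).

Definition normF (k : nat) x y z t := norm2 (f1 x y z t) (f2 k x y z t).
Definition normdFt (k : nat) x y z t := norm2 (dT f1 x y z t) (dT (f2 k) x y z t).

(* real power a^theta for a >= 0, with the convention 0^theta = 0 (theta > 0) *)
Definition rpow (a theta : R) : R :=
  if Req_EM_T a 0 then 0 else Rpower a theta.

Definition bad_point (k : nat) (p1 p2 p3 : R) : Prop :=
  f1 p1 p2 p3 0 = 0 /\ f2 k p1 p2 p3 0 = 0 /\ SingF0 k p1 p2 p3 /\
  ~ (p1 = 0 /\ p2 = 0 /\ p3 = 0).

Definition near_p0 (d p1 p2 p3 x y z t : R) : Prop :=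
  Rabs (x - p1) < d /\ Rabs (y - p2) < d /\ Rabs (z - p3) < d /\ Rabs t < d.

(* Near a point (0,0,p3,0) with p3 <> 0 the two u-gradients of F_t are (1,0,0) and
   (f2_x, f2_y, f2_z) with f2_y >= x^2 z^2 and f2_x bounded.  The least eigenvalue of their
   Gram matrix is at least det / trace, so nu_{F_t} >= C x^2, which dominates
   |dF/dt| = |x|^k: condition (P) holds.  On the line (x,0,1,0), however, ||F|| = |x| while
   nu_{F_t} <= x^2 (1 + x^2), so no power ||F||^theta with theta < 1 is bounded by a multiple
   of nu_{F_t}: condition (L) fails. *)

From Stdlib Require Import Reals Lra Lia Psatz.
From Coquelicot Require Import Coquelicot.
Open Scope R_scope.

Lemma dX_f1 x y z t : dX f1 x y z t = 1.
Proof. apply is_derive_unique; unfold f1; auto_derive; auto. Qed.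
Lemma dY_f1 x y z t : dY f1 x y z t = 0.
Proof. apply is_derive_unique; unfold f1; auto_derive; auto. Qed.
Lemma dZ_f1 x y z t : dZ f1 x y z t = 0.
Proof. apply is_derive_unique; unfold f1; auto_derive; auto. Qed.
Lemma dT_f1 x y z t : dT f1 x y z t = 0.
Proof. apply is_derive_unique; unfold f1; auto_derive; auto. Qed.
Lemma dX_ft x y z t : dX ft x y z t = 0.
Proof. apply is_derive_unique; unfold ft; auto_derive; auto. Qed.
Lemma dY_ft x y z t : dY ft x y z t = 0.
Proof. apply is_derive_unique; unfold ft; auto_derive; auto. Qed.
Lemma dZ_ft x y z t : dZ ft x y z t = 0.
Proof. apply is_derive_unique; unfold ft; auto_derive; auto. Qed.
Lemma dT_ft x y z t : dT ft x y z t = 1.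
Proof. apply is_derive_unique; unfold ft; auto_derive; auto. Qed.

Lemma dX_f2 k x y z t : dX (f2 k) x y z t =
  6 * y^3 * (x^2 + y^2 + z^2)^2 * x + 2 * x * y * (x^2 + y^2 + z^2) + 2 * x^3 * y
  + t * (INR k * x^(pred k)).
Proof. apply is_derive_unique; unfold f2; auto_derive; auto; ring. Qed.
Lemma dY_f2 k x y z t : dY (f2 k) x y z t =
  3 * y^2 * (x^2 + y^2 + z^2)^3 + 6 * y^4 * (x^2 + y^2 + z^2)^2
  + x^2 * (x^2 + y^2 + z^2) + 2 * x^2 * y^2.
Proof. apply is_derive_unique; unfold f2; auto_derive; auto; ring. Qed.
Lemma dZ_f2 k x y z t : dZ (f2 k) x y z t =
  6 * y^3 * (x^2 + y^2 + z^2)^2 * z + 2 * x^2 * y * z.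
Proof. apply is_derive_unique; unfold f2; auto_derive; auto; ring. Qed.
Lemma dT_f2 k x y z t : dT (f2 k) x y z t = x^k.
Proof. apply is_derive_unique; unfold f2; auto_derive; auto; ring. Qed.

Hint Rewrite dX_f1 dY_f1 dZ_f1 dT_f1 dX_ft dY_ft dZ_ft dT_ft : partials.

Lemma pow_eq0 x n : x ^ n = 0 -> x = 0.
Proof.
  intros H; destruct (Req_dec x 0) as [|Hx]; [easy|].
  now apply pow_nonzero with (n := n) in Hx.
Qed.

Lemma real_Glb_Rbar_bounds (E : R -> Prop) (L e : R) :
  E e -> (forall r, E r -> L <= r) ->
  L <= real (Glb_Rbar E) /\ real (Glb_Rbar E) <= e.
Proof.
  intros He HL; destruct (Glb_Rbar_correct E) as [Hlow Hgreatest].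
  assert (Hle := Hlow e He).
  assert (HLle : Rbar_le L (Glb_Rbar E)) by (apply Hgreatest; intros r Hr; apply HL, Hr).
  destruct (Glb_Rbar E); easy.
Qed.

Lemma norm3_unit_comb k x y z t a1 a2 :
  norm3 (a1 * dX f1 x y z t + a2 * dX (f2 k) x y z t)
        (a1 * dY f1 x y z t + a2 * dY (f2 k) x y z t)
        (a1 * dZ f1 x y z t + a2 * dZ (f2 k) x y z t)
  = sqrt ((a1 + a2 * dX (f2 k) x y z t)^2
          + a2^2 * (dY (f2 k) x y z t ^ 2 + dZ (f2 k) x y z t ^ 2)).
Proof. unfold norm3; autorewrite with partials; f_equal; ring. Qed.

Lemma nu_le_unit_comb k x y z t a1 a2 : a1^2 + a2^2 = 1 ->
  nu k x y z t <= sqrt ((a1 + a2 * dX (f2 k) x y z t)^2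
                        + a2^2 * (dY (f2 k) x y z t ^ 2 + dZ (f2 k) x y z t ^ 2)).
Proof.
  intros Ha; rewrite <- norm3_unit_comb.
  apply (real_Glb_Rbar_bounds _ 0); [now exists a1, a2|].
  intros r (b1 & b2 & _ & ->); apply sqrt_pos.
Qed.

Lemma nu_ge_of_sq k x y z t L : 0 <= L ->
  (forall a1 a2, a1^2 + a2^2 = 1 ->
     L^2 <= (a1 + a2 * dX (f2 k) x y z t)^2
            + a2^2 * (dY (f2 k) x y z t ^ 2 + dZ (f2 k) x y z t ^ 2)) ->
  L <= nu k x y z t.
Proof.
  intros HL Hsq.
  apply (real_Glb_Rbar_bounds _ _ (norm3 (1 * dX f1 x y z t + 0 * dX (f2 k) x y z t)
    (1 * dY f1 x y z t + 0 * dY (f2 k) x y z t) (1 * dZ f1 x y z t + 0 * dZ (f2 k) x y z t))).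
  - exists 1, 0; split; [ring | reflexivity].
  - intros r (a1 & a2 & Ha & ->); rewrite norm3_unit_comb, <- (sqrt_pow2 L HL).
    now apply sqrt_le_1_alt, Hsq.
Qed.

(* The quadratic form [a |-> |a1 (1,0,0) + a2 (w,fy,fz)|^2] has Gram determinant
   [G = fy^2 + fz^2] and trace [1 + w^2 + G], and its least eigenvalue is at least
   det / trace; the exact defect is [A^2 + (A w + a2 G)^2] with [A = a1 + a2 w]. *)
Lemma unit_comb_sq_ge a1 a2 w g G : a1^2 + a2^2 = 1 -> 0 <= g <= G ->
  g / (1 + w^2 + g) <= (a1 + a2 * w)^2 + a2^2 * G.
Proof.
  intros Ha Hg.
  assert (Hw : 0 <= w^2) by apply pow2_ge_0.
  assert (Hmono : g / (1 + w^2 + g) <= G / (1 + w^2 + G)).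
  { replace (g / (1 + w^2 + g))
      with (g * (1 + w^2 + G) / ((1 + w^2 + g) * (1 + w^2 + G))) by (field; lra).
    replace (G / (1 + w^2 + G))
      with (G * (1 + w^2 + g) / ((1 + w^2 + g) * (1 + w^2 + G))) by (field; lra).
    apply Rmult_le_compat_r; [left; apply Rinv_0_lt_compat|]; nra. }
  apply (Rle_trans _ _ _ Hmono), Rle_div_l; [lra|].
  assert (Hdefect : ((a1 + a2 * w)^2 + a2^2 * G) * (1 + w^2 + G) - G * (a1^2 + a2^2)
                    = (a1 + a2 * w)^2 + ((a1 + a2 * w) * w + a2 * G)^2) by ring.
  rewrite Ha in Hdefect.
  assert (0 <= (a1 + a2 * w)^2) by apply pow2_ge_0.
  assert (0 <= ((a1 + a2 * w) * w + a2 * G)^2) by apply pow2_ge_0.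
  lra.
Qed.

Lemma pow2_gt0 x : x <> 0 -> 0 < x^2.
Proof. intros Hx; rewrite <- pow2_abs; apply pow_lt, Rabs_pos_lt, Hx. Qed.

Lemma f2_x0 k y z t : (1 <= k)%nat -> f2 k 0 y z t = (y * (y^2 + z^2))^3.
Proof. intros Hk; unfold f2; rewrite (pow_i k) by lia; ring. Qed.

Lemma dY_f2_x0_pos k y z t : y <> 0 -> 0 < dY (f2 k) 0 y z t.
Proof.
  intros Hy; rewrite dY_f2.
  replace (_ + _) with (3 * y^2 * (y^2 + z^2)^3 + 6 * (y^2)^2 * (y^2 + z^2)^2) by ring.
  assert (Hy2 := pow2_gt0 y Hy); assert (Hz2 := pow2_ge_0 z).
  assert (0 < y^2 * (y^2 + z^2)^3) by (apply Rmult_lt_0_compat, pow_lt; lra).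
  assert (0 <= (y^2)^2 * (y^2 + z^2)^2) by (apply Rmult_le_pos; apply pow2_ge_0).
  lra.
Qed.

Lemma zero_set_F k (hk : (5 <= k)%nat) x y z t :
  (f1 x y z t = 0 /\ f2 k x y z t = 0) <-> (x = 0 /\ y = 0).
Proof.
  unfold f1; split.
  - intros [-> Hf2]; split; [reflexivity|].
    rewrite f2_x0 in Hf2 by lia; apply pow_eq0 in Hf2.
    destruct (Rmult_integral _ _ Hf2) as [|Hr]; [assumption|].
    assert (0 <= z^2) by apply pow2_ge_0.
    assert (0 <= y^2) by apply pow2_ge_0.
    apply (pow_eq0 y 2); lra.
  - intros [-> ->]; split; [reflexivity|].
    rewrite f2_x0 by lia; ring.
Qed.

Lemma SingF_iff k (hk : (5 <= k)%nat) x y z t :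
  SingF k x y z t <-> (f1 x y z t = 0 /\ f2 k x y z t = 0).
Proof.
  rewrite zero_set_F by exact hk; unfold SingF; autorewrite with partials.
  split.
  - intros (a1 & a2 & Hne & EX & EY & EZ & ET).
    assert (Ha2 : a2 <> 0) by (intros ->; destruct Hne; lra).
    assert (Hx : x = 0).
    { rewrite dT_f2 in ET; apply (pow_eq0 x k), (Rmult_eq_reg_l a2); lra. }
    subst x; split; [reflexivity|].
    destruct (Req_dec y 0) as [|Hy]; [assumption|].
    pose proof (dY_f2_x0_pos k y z t Hy).
    destruct (Rmult_integral a2 (dY (f2 k) 0 y z t)); lra.
  - intros [-> ->]; exists (- dX (f2 k) 0 0 z t), 1; split; [right; lra|].
    rewrite dY_f2, dZ_f2, dT_f2, (pow_i k) by lia; repeat split; ring.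
Qed.

Lemma bad_point_001 k (hk : (5 <= k)%nat) : bad_point k 0 0 1.
Proof.
  split; [reflexivity|]; split; [rewrite f2_x0; [ring | lia]|]; split; [|lra].
  exists 0, 1; rewrite dX_f2, dY_f2, dZ_f2; autorewrite with partials.
  split; [right; lra|]; repeat split; ring.
Qed.

Lemma dY_f2_axis k x : dY (f2 k) x 0 1 0 = x^2 * (x^2 + 1).
Proof. rewrite dY_f2; ring. Qed.

Lemma not_SingFtilde_axis k x : x <> 0 -> ~ SingFtilde k x 0 1 0.
Proof.
  intros Hx (a1 & a2 & a3 & Hne & EX & EY & EZ & ET).
  autorewrite with partials in *; rewrite dY_f2_axis in EY.
  assert (Hfy : 0 < x^2 * (x^2 + 1)).
  { assert (Hx2 := pow2_gt0 x Hx); apply Rmult_lt_0_compat; lra. }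
  assert (a2 = 0) by (destruct (Rmult_integral a2 (x^2 * (x^2 + 1))); lra).
  subst a2; destruct Hne as [|[|]]; lra.
Qed.

Lemma normF_axis k x : normF k x 0 1 0 = Rabs x.
Proof.
  unfold normF, norm2, f1, f2.
  rewrite <- sqrt_Rsqr_abs; unfold Rsqr; f_equal; ring.
Qed.

Lemma nu_axis_le k x : nu k x 0 1 0 <= x^2 * (x^2 + 1).
Proof.
  eapply Rle_trans; [apply (nu_le_unit_comb k x 0 1 0 0 1); ring|].
  rewrite dX_f2, dY_f2_axis, dZ_f2.
  replace (_ + _) with ((x^2 * (x^2 + 1))^2) by ring.
  rewrite sqrt_pow2; [lra|].
  apply Rmult_le_pos; [|pose proof (pow2_ge_0 x)]; nra.
Qed.

Lemma rpow_ge_base x th : 0 < x < 1 -> th < 1 -> x <= rpow x th.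
Proof.
  intros Hx Hth; unfold rpow, Rpower.
  destruct (Req_EM_T x 0) as [|_]; [lra|].
  assert (Hln : ln x < 0) by (rewrite <- ln_1; apply ln_increasing; lra).
  rewrite <- (exp_ln x) at 1 by lra.
  assert (Hle : ln x <= th * ln x) by nra.
  destruct Hle as [Hlt | Heq]; [left; apply exp_increasing, Hlt | right; f_equal; exact Heq].
Qed.

Lemma not_condition_L k (hk : (5 <= k)%nat) :
  ~ (exists theta : R, 0 < theta < 1 /\
       forall p1 p2 p3 : R, bad_point k p1 p2 p3 ->
         exists c : R, 0 < c /\ exists d : R, 0 < d /\
           forall x y z t : R, near_p0 d p1 p2 p3 x y z t ->
             ~ SingFtilde k x y z t ->
             rpow (normF k x y z t) theta <= c * nu k x y z t).
Proof.
  intros (th & Hth & HL).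
  destruct (HL 0 0 1 (bad_point_001 k hk)) as (c & Hc & d & Hd & Hbound).
  set (x := Rmin (d/2) (Rmin (1/2) (1/(4*c)))).
  assert (Hx0 : 0 < x).
  { repeat apply Rmin_pos; try lra; apply Rdiv_lt_0_compat; lra. }
  assert (Hxd : x <= d/2) by apply Rmin_l.
  assert (Hx1 : x <= 1/2) by (eapply Rle_trans; [apply Rmin_r | apply Rmin_l]).
  assert (Hcx : c * x <= 1/4).
  { assert (Hxc : x <= 1/(4*c)) by (eapply Rle_trans; [apply Rmin_r | apply Rmin_r]).
    apply (Rmult_le_compat_l c) in Hxc; [|lra].
    replace (c * (1/(4*c))) with (1/4) in Hxc by (field; lra); exact Hxc. }
  assert (Hnear : near_p0 d 0 0 1 x 0 1 0).
  { unfold near_p0; rewrite !Rminus_0_r, Rminus_diag, Rabs_R0, Rabs_pos_eq by lra.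
    repeat split; lra. }
  specialize (Hbound x 0 1 0 Hnear (not_SingFtilde_axis k x ltac:(lra))).
  rewrite normF_axis, Rabs_pos_eq in Hbound by lra.
  assert (Hlow := rpow_ge_base x th ltac:(lra) ltac:(lra)).
  assert (Hnu := nu_axis_le k x).
  (* [c x^2 (x^2+1) = (c x) x (x^2+1) <= x/4 * 5/4 < x] *)
  assert (c * nu k x 0 1 0 <= (c * x) * (x * (x^2 + 1))).
  { replace (_ * (x * _)) with (c * (x^2 * (x^2 + 1))) by ring.
    apply Rmult_le_compat_l; lra. }
  assert (x * (x^2 + 1) <= 5/8 * x) by (simpl; nra).
  nra.
Qed.

Lemma Rabs_pow_le1 a n : Rabs a <= 1 -> Rabs (a^n) <= 1.
Proof.
  intros Ha; rewrite <- RPow_abs.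
  induction n as [|n IH]; simpl; [lra|].
  pose proof (Rabs_pos a); pose proof (pow_le _ n (Rabs_pos a)); nra.
Qed.

Lemma Rabs_pow_le_sq a n : Rabs a <= 1 -> (2 <= n)%nat -> Rabs (a^n) <= a^2.
Proof.
  intros Ha Hn; replace n with (2 + (n - 2))%nat by lia.
  rewrite pow_add, Rabs_mult, <- RPow_abs, pow2_abs.
  pose proof (Rabs_pow_le1 a (n - 2) Ha); pose proof (pow2_ge_0 a).
  pose proof (Rabs_pos (a ^ (n - 2))); nra.
Qed.

Lemma dY_f2_ge k x y z t : x^2 * z^2 <= dY (f2 k) x y z t.
Proof.
  rewrite dY_f2.
  assert (Hx := pow2_ge_0 x); assert (Hy := pow2_ge_0 y); assert (Hz := pow2_ge_0 z).
  assert (Hr : 0 <= x^2 + y^2 + z^2) by lra.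
  assert (0 <= y^2 * (x^2 + y^2 + z^2)^3) by (apply Rmult_le_pos; [|apply pow_le]; lra).
  assert (0 <= y^4 * (x^2 + y^2 + z^2)^2).
  { apply Rmult_le_pos; [replace (y^4) with ((y^2)^2) by ring|]; apply pow2_ge_0. }
  nra.
Qed.

Lemma Rabs_dX_f2_le k x y z t R0 :
  Rabs x <= 1 -> Rabs y <= 1 -> Rabs t <= 1 -> x^2 + y^2 + z^2 <= R0 ->
  Rabs (dX (f2 k) x y z t) <= 6 * R0^2 + 2 * R0 + 2 + INR k.
Proof.
  intros Hx Hy Ht Hr; rewrite dX_f2.
  set (r := x^2 + y^2 + z^2) in *.
  assert (Hr0 : 0 <= r) by (unfold r; pose proof (pow2_ge_0 x);
    pose proof (pow2_ge_0 y); pose proof (pow2_ge_0 z); lra).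
  assert (Hr2 : r^2 <= R0^2) by (apply pow_incr; lra).
  assert (Hy3 := Rabs_pow_le1 y 3 Hy); assert (Hx3 := Rabs_pow_le1 x 3 Hx).
  assert (Hxk := Rabs_pow_le1 x (pred k) Hx).
  pose proof (pos_INR k); pose proof (pow2_ge_0 r).
  pose proof (Rabs_pos x); pose proof (Rabs_pos y); pose proof (Rabs_pos t).
  pose proof (Rabs_pos (x^3)); pose proof (Rabs_pos (y^3)); pose proof (Rabs_pos (x^(pred k))).
  assert (Rabs (y^3) * Rabs x <= 1) by nra; assert (Rabs x * Rabs y <= 1) by nra.
  assert (Rabs (x^3) * Rabs y <= 1) by nra; assert (Rabs t * Rabs (x^(pred k)) <= 1) by nra.
  repeat (eapply Rle_trans; [apply Rabs_triang|]; apply Rplus_le_compat);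
    rewrite ?Rabs_mult, ?(Rabs_pos_eq r), ?(Rabs_pos_eq (r^2)), ?(Rabs_pos_eq (INR k)),
      ?(Rabs_pos_eq 6), ?(Rabs_pos_eq 2) by lra; nra.
Qed.

Lemma nu_ge_off_axis k x y z t q S : 0 < q -> x^2 <= 1 -> q <= z^2 ->
  Rabs (dX (f2 k) x y z t) <= S ->
  x^2 * q^2 <= (1 + S^2 + q^2) * nu k x y z t.
Proof.
  intros Hq Hx Hz Hw.
  set (w := dX (f2 k) x y z t) in *.
  set (B := 1 + S^2 + q^2).
  assert (Hx2 := pow2_ge_0 x); assert (HS := pow2_ge_0 S).
  assert (Hq2 : 0 < q^2) by (apply pow_lt, Hq).
  assert (HB : q^2 <= B) by (unfold B; lra).
  assert (Hw2 : w^2 <= S^2)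
    by (rewrite <- pow2_abs; apply pow_incr; split; [apply Rabs_pos | exact Hw]).
  set (g := (x^2 * q)^2).
  assert (Hg : 0 <= g <= q^2).
  { unfold g; rewrite Rpow_mult_distr; split; [apply Rmult_le_pos; apply pow2_ge_0|].
    rewrite <- (Rmult_1_l (q^2)) at 2; apply Rmult_le_compat_r; [lra | simpl; nra]. }
  assert (HgG : g <= dY (f2 k) x y z t ^ 2 + dZ (f2 k) x y z t ^ 2).
  { pose proof (dY_f2_ge k x y z t); pose proof (pow2_ge_0 (dZ (f2 k) x y z t)).
    assert (0 <= x^2 * q <= dY (f2 k) x y z t) by (split; nra).
    unfold g; assert ((x^2 * q)^2 <= dY (f2 k) x y z t ^ 2) by (apply pow_incr; lra); lra. }
  rewrite (Rmult_comm B); apply Rle_div_l; [lra|].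
  apply nu_ge_of_sq; [apply Rdiv_le_0_compat; nra|].
  intros a1 a2 Ha.
  eapply Rle_trans; [|apply (unit_comb_sq_ge a1 a2 w g); lra].
  (* [(x^2 q^2 / B)^2 <= x^4 q^2 / B = g / B <= g / (1 + w^2 + g)] *)
  apply Rle_trans with (g / B).
  - replace ((x^2 * q^2 / B)^2) with (g / B * (q^2 / B)) by (unfold g; field; lra).
    rewrite <- (Rmult_1_r (g / B)) at 2.
    apply Rmult_le_compat_l; [apply Rdiv_le_0_compat; lra|].
    apply Rle_div_l; lra.
  - pose proof (pow2_ge_0 w); unfold Rdiv.
    apply Rmult_le_compat_l, Rinv_le_contravar; unfold B; lra.
Qed.

Lemma normdFt_le k x y z t : (2 <= k)%nat -> Rabs x <= 1 -> normdFt k x y z t <= x^2.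
Proof.
  intros Hk Hx; unfold normdFt, norm2; rewrite dT_f1, dT_f2.
  replace (0^2 + (x^k)^2) with (Rsqr (x^k)) by (unfold Rsqr; ring).
  rewrite sqrt_Rsqr_abs; apply Rabs_pow_le_sq; assumption.
Qed.

Lemma condition_P k (hk : (5 <= k)%nat) p1 p2 p3 : bad_point k p1 p2 p3 ->
  exists c : R, 0 < c /\ exists d : R, 0 < d /\
    forall x y z t : R, near_p0 d p1 p2 p3 x y z t ->
      ~ SingFtilde k x y z t ->
      normdFt k x y z t <= c * nu k x y z t.
Proof.
  intros (Hf1 & Hf2 & _ & Hp).
  destruct (proj1 (zero_set_F k hk p1 p2 p3 0) (conj Hf1 Hf2)) as [-> ->].
  set (P := Rabs p3).
  assert (HP : 0 < P) by (apply Rabs_pos_lt; intros ->; apply Hp; auto).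
  set (q := (P / 2)^2).
  set (R0 := 2 + (P + 1)^2).
  set (S := 6 * R0^2 + 2 * R0 + 2 + INR k).
  assert (Hq : 0 < q) by (apply pow_lt; lra).
  exists ((1 + S^2 + q^2) / q^2); split.
  { apply Rdiv_lt_0_compat; [pose proof (pow2_ge_0 S) | apply pow_lt]; nra. }
  exists (Rmin 1 (P / 2)); split; [apply Rmin_pos; lra|].
  intros x y z t (Hx & Hy & Hz & Ht) _; rewrite !Rminus_0_r in Hx, Hy.
  assert (Hd := Rmin_l 1 (P / 2)); assert (Hd' := Rmin_r 1 (P / 2)).
  assert (Hx2 : x^2 <= 1) by (rewrite <- pow2_abs; pose proof (Rabs_pos x); simpl; nra).
  assert (Hy2 : y^2 <= 1) by (rewrite <- pow2_abs; pose proof (Rabs_pos y); simpl; nra).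
  assert (Hzq : q <= z^2).
  { pose proof (Rabs_triang_inv p3 (p3 - z)) as Htri.
    rewrite (Rabs_minus_sym p3 z) in Htri; replace (p3 - (p3 - z)) with z in Htri by ring.
    fold P in Htri; unfold q; rewrite <- (pow2_abs z); apply pow_incr; lra. }
  assert (Hr : x^2 + y^2 + z^2 <= R0).
  { pose proof (Rabs_triang (z - p3) p3) as Htri.
    replace (z - p3 + p3) with z in Htri by ring; fold P in Htri.
    assert (z^2 <= (P + 1)^2)
      by (rewrite <- (pow2_abs z); apply pow_incr; pose proof (Rabs_pos z); lra).
    unfold R0; lra. }
  apply Rle_trans with (x^2); [apply normdFt_le; [lia | lra]|].
  assert (Hnu : x^2 * q^2 <= (1 + S^2 + q^2) * nu k x y z t).
  { apply nu_ge_off_axis; [lra | lra | lra | apply Rabs_dX_f2_le; lra]. }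
  apply (Rmult_le_reg_r (q^2)); [apply pow_lt, Hq|].
  replace ((1 + S^2 + q^2) / q^2 * nu k x y z t * q^2)
    with ((1 + S^2 + q^2) * nu k x y z t) by (field; lra).
  exact Hnu.
Qed.

Theorem mainTheorem9 (k : nat) (hk : (5 <= k)%nat) :
  (forall x y z t : R, SingF k x y z t <-> (f1 x y z t = 0 /\ f2 k x y z t = 0)) /\
  (forall x y z t : R, (f1 x y z t = 0 /\ f2 k x y z t = 0) <-> (x = 0 /\ y = 0)) /\
  ~ (exists theta : R, 0 < theta < 1 /\
       forall p1 p2 p3 : R, bad_point k p1 p2 p3 ->
         exists c : R, 0 < c /\ exists d : R, 0 < d /\
           forall x y z t : R, near_p0 d p1 p2 p3 x y z t ->
             ~ SingFtilde k x y z t ->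
             rpow (normF k x y z t) theta <= c * nu k x y z t) /\
  (forall p1 p2 p3 : R, bad_point k p1 p2 p3 ->
     exists c : R, 0 < c /\ exists d : R, 0 < d /\
       forall x y z t : R, near_p0 d p1 p2 p3 x y z t ->
         ~ SingFtilde k x y z t ->
         normdFt k x y z t <= c * nu k x y z t).
Proof.
  split; [intros; apply SingF_iff, hk|].
  split; [intros; apply zero_set_F, hk|].
  split; [apply not_condition_L, hk|].
  intros; apply condition_P; assumption.
Qed.
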